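(* Let $G$ be an arbitrary directed graph on $\{D\}\cup[n]$ (no connectivity assumption). Run the SNEAK communication protocol on $G$. For every set $J\subseteq[n]$ with $|J|\le k-1$, the collection of all data received by the participants in $J$ during the protocol is statistically independent of the secret $\mathbf s$ (for any distribution of $\mathbf s$). In particular, the collection $(\psi_j^TM)_{j\in J}$ is independent of $\mathbf s$.
   Context: Fix integers $n\ge k\ge 2$ and $d\ge k$, and a finite field $\mathbb{F}_q$ with $q>n$ (the integers $1,\dots,n$ are regarded as distinct elements of $\mathbb{F}_q$). For $i\in[n]=\{1,\dots,n\}$ let $\psi_i=(1,i,i^2,\dots,i^{d-1})^T\in\mathbb{F}_q^d$. The secret is $\mathbf s=(s_1,\dots,s_{d-k+1})\in\mathbb{F}_q^{d-k+1}$; write $s_A=s_{d-k+1}\in\mathbb{F}_q$ and $s_B=(s_1,\dots,s_{d-k})^T\in\mathbb{F}_q^{d-k}$. The dealer forms the symmetric $d\times d$ matrix $$M=\begin{pmatrix} s_A & r_a^T & s_B^T\\ r_a & R_b & R_c^T\\ s_B & R_c & 0\end{pmatrix}$$ with row/column blocks of sizes $1,\,k-1,\,d-k$, where $r_a\in\mathbb{F}_q^{k-1}$, $R_b$ is a symmetric $(k-1)\times(k-1)$ matrix, $R_c$ is a $(d-k)\times(k-1)$ matrix, and $0$ is the $(d-k)\times(d-k)$ zero matrix; the $R=(k-1)d-\binom{k-1}{2}$ free entries of $r_a,R_b,R_c$ (for $R_b$: the entries on and above the diagonal) are independent, uniform on $\mathbb{F}_q$, and independent of $\mathbf s$. The share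 of participant $j$ is $t_j^T=\psi_j^T N$, where $N=\begin{pmatrix} s_A & s_B^T\\ r_a & R_c^T\\ s_B & 0\end{pmatrix}$ is the $d\times(d-k+1)$ matrix formed by the first column and the last $d-k$ columns of $M$. Network: $G$ is a directed graph on $\{D\}\cup[n]$ ($D$ the dealer; an undirected edge counts as two directed edges); $\mathcal N(D)$ is the set of out-neighbours of $D$. SNEAK communication protocol: (i) the dealer sends the vector $\psi_j^TM$ to each $j\in\mathcal N(D)$; (ii) each participant $\ell\in\mathcal N(D)$, upon receiving $\psi_\ell^TM$, sends the scalar $\psi_\ell^TM\psi_j$ to each out-neighbour $j$; (iii) each participant $\ell\notin\mathcal N(D)$ waits until it has received one scalar from each of some $d$ distinct in-neighbours $i_1,\dots,i_d$, with values $\sigma_1,\dots,\sigma_d$ (extra received values are discarded), computes $v=V^{-1}(\sigma_1,\dots,\sigma_d)^T$ where $V$ is the $d\times d$ matrix with rows $\psi_{i_1}^T,\dots,\psi_{i_d}^T$, and sends the scalar $v^T\psi_i$ to each out-neighbour $i$ from which it did not receive data. *)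

From HB Require Import structures.
From mathcomp Require Import all_boot all_order all_algebra.
Set Implicit Arguments. Unset Strict Implicit. Unset Printing Implicit Defensive.
Import GRing.Theory.
Local Open Scope ring_scope.

Definition mget (F : nzRingType) (m p : nat) (A : 'M[F]_(m, p)) (i j : nat) : F :=
  match (insub i : option 'I_m), (insub j : option 'I_p) with
  | Some i', Some j' => A i' j'
  | _, _ => 0
  end.

Section SNEAK.
Variable F : finFieldType.
Variables (n k d : nat).
(* alpha i : the field element that "participant i" is identified with
   (the paper's integer i+1 regarded as an element of F_q). *)
Variable alpha : 'I_n -> F.

(* The randomness: r_a, the matrix whose on-and-above-diagonal entries are
   the free entries of R_b (entries strictly below the diagonal are unused),
   and R_c. *)
Notation randT := ('cV[F]_(k - 1) * 'M[F]_(k - 1) * 'M[F]_(d - k, k - 1))%type.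

(* Secret s = (s_1, ..., s_{d-k+1}) stored 0-based: s_B = entries 0..d-k-1,
   s_A = entry d-k. *)
Definition Mupper (s : 'rV[F]_(d - k + 1)) (r : randT) (i j : nat) : F :=
  let: (ra, Rb, Rc) := r in
  if i == 0%N then
    if j == 0%N then mget s 0 (d - k)
    else if (j < k)%N then mget ra j.-1 0             (* r_a^T *)
    else mget s 0 (j - k)                         (* s_B^T *)
  else if (i < k)%N then
    if (j < k)%N then mget Rb i.-1 j.-1               (* R_b (upper part) *)
    else mget Rc (j - k) i.-1                     (* R_c^T *)
  else 0.

Definition Mmat (s : 'rV[F]_(d - k + 1)) (r : randT) : 'M[F]_d :=
  \matrix_(i < d, j < d)
     (if (i <= j)%N then Mupper s r i j else Mupper s r j i).

Definition psi (i : 'I_n) : 'cV[F]_d := \col_(c < d) (alpha i ^+ c).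

(* Nodes: None = dealer D, Some i = participant i. *)
Definition payload := ('rV[F]_d + F)%type.

Record state := State {
  ddel  : 'I_n -> bool;                   (* dealer's message to j delivered *)
  msg   : 'I_n -> 'I_n -> option F;       (* scalar sent by a to b, if any *)
  del   : 'I_n -> 'I_n -> bool;           (* that scalar has been delivered *)
  recv  : 'I_n -> seq (option 'I_n * payload); (* everything received, in order *)
  fired : 'I_n -> bool                    (* participant has already sent *)
}.

Definition init_state : state :=
  State (fun _ => false) (fun _ _ => None) (fun _ _ => false)
        (fun _ => [::]) (fun _ => false).

Definition scalars_of (l : seq (option 'I_n * payload)) : seq ('I_n * F) :=
  pmap (fun e => match e with (Some a, inr x) => Some (a, x) | _ => None end) l.

Definition dvec_of (l : seq (option 'I_n * payload)) : option 'rV[F]_d :=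
  ohead (pmap (fun e => match e with (None, inl w) => Some w | _ => None end) l).

(* Step (iii): from the first d received scalars, v = V^{-1} sigma. *)
Definition reconstruct (l : seq (option 'I_n * payload)) : 'cV[F]_d :=
  let L := map Some (take d (scalars_of l)) in
  let V := \matrix_(t < d, c < d)
            (match nth None L t with Some (a, _) => alpha a ^+ c | None => 0 end) in
  let sigma := \col_(t < d)
            (match nth None L t with Some (_, x) => x | None => 0 end) in
  invmx V *m sigma.

Variable G : rel (option 'I_n).
Definition inND (j : 'I_n) : bool := G None (Some j).

Definition react (st : state) (b : 'I_n) : state :=
  let l := recv st b in
  if fired st b then st else
  if inND b then
    match dvec_of l with
    | Some w =>
        State (ddel st)
          (fun a j => if (a == b) && G (Some b) (Some j)
                      then Some ((w *m psi j) 0 0) else msg st a j)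
          (del st) (recv st) (fun a => (a == b) || fired st a)
    | None => st
    end
  else if (d <= size (scalars_of l))%N then
    let v := reconstruct l in
    let senders := map fst (scalars_of l) in
    State (ddel st)
      (fun a i => if [&& a == b, G (Some b) (Some i) & i \notin senders]
                  then Some ((v^T *m psi i) 0 0) else msg st a i)
      (del st) (recv st) (fun a => (a == b) || fired st a)
  else st.

Definition deliver (st : state) (b : 'I_n) (e : option 'I_n * payload)
    (dd : 'I_n -> bool) (dl : 'I_n -> 'I_n -> bool) : state :=
  react (State dd (msg st) dl
           (fun j => if j == b then rcons (recv st j) e else recv st j)
           (fired st)) b.

(* One scheduling event: delivery of the (pending) message on edge src -> dst;
   a no-op if there is no such undelivered message. *)
Definition step (s : 'rV[F]_(d - k + 1)) (r : randT) (st : state)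
    (ev : option 'I_n * 'I_n) : state :=
  let: (src, dst) := ev in
  match src with
  | None =>
      if inND dst && ~~ ddel st dst then
        deliver st dst (None, inl ((psi dst)^T *m Mmat s r))
          (fun j => (j == dst) || ddel st j) (del st)
      else st
  | Some a =>
      match msg st a dst with
      | Some x =>
          if ~~ del st a dst then
            deliver st dst (Some a, inr x) (ddel st)
              (fun a' b' => ((a' == a) && (b' == dst)) || del st a' b')
          else st
      | None => st
      end
  end.

Definition run (s : 'rV[F]_(d - k + 1)) (r : randT)
    (sched : seq (option 'I_n * 'I_n)) : state :=
  foldl (step s r) init_state sched.

Definition view (J : {set 'I_n}) (s : 'rV[F]_(d - k + 1)) (r : randT)
    (sched : seq (option 'I_n * 'I_n)) : seq (seq (option 'I_n * payload)) :=
  [seq recv (run s r sched) j | j <- enum J].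

End SNEAK.

Definition share_view (F : finFieldType) (n k d : nat) (alpha : 'I_n -> F)
    (J : {set 'I_n}) (s : 'rV[F]_(d - k + 1))
    (r : 'cV[F]_(k - 1) * 'M[F]_(k - 1) * 'M[F]_(d - k, k - 1)) : seq 'rV[F]_d :=
  [seq (psi d alpha j)^T *m Mmat s r | j <- enum J].

(* Write M = M(s, r) for the dealer's matrix built from the secret s and the
   randomness r; it is symmetric and additive in the pair (s, r).
   1. Masking.  For every secret delta there is randomness r0 with
      psi_j^T M(delta, r0) = 0 for all j in J.  With the vanishing polynomial
      P = prod_{j in J} (X - alpha_j) (degree |J| < k) and a multiple A of P
      whose coefficients of degree >= k are prescribed, the symmetric form
      f(a, b) = A_a P_b + P_a A_b + c P_a P_b has exactly the block shape of
      M(delta, _), and psi_j^T [f] = A(alpha_j) P + P(alpha_j) A + ... = 0.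
      By additivity r |-> r + r0(s1 - s2) then carries the shares of J under
      s2 to those under s1.
   2. Simulation.  Along any schedule, which messages exist and when they are
      delivered does not depend on (s, r); every delivered value is correct
      (step (iii) inverts a Vandermonde system of correct values).  As M is
      symmetric, a correct value received by j is determined by psi_j^T M, so
      the view of J is a function of the shares of J.
   3. The theorem follows since r |-> r + r0 is a bijection of the randomness
      space transporting one fiber of the view onto the other. *)

From HB Require Import structures.
From mathcomp Require Import all_boot all_order all_algebra.
From mathcomp Require Import ring zify.
Set Implicit Arguments. Unset Strict Implicit. Unset Printing Implicit Defensive.
Import GRing.Theory.
Local Open Scope ring_scope.

Lemma mgetD (R : nzRingType) (m p : nat) (A B : 'M[R]_(m, p)) (i j : nat) :
  mget (A + B) i j = mget A i j + mget B i j.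
Proof.
rewrite /mget.
by case: (insub i : option 'I_m) => [i'|]; case: (insub j : option 'I_p) => [j'|];
  rewrite ?mxE ?addr0.
Qed.

Lemma mget_ord (R : nzRingType) (m p : nat) (A : 'M[R]_(m, p)) (i j : nat)
    (hi : (i < m)%N) (hj : (j < p)%N) :
  mget A i j = A (Ordinal hi) (Ordinal hj).
Proof.
rewrite /mget; case: insubP => [i' _ ei|]; last by rewrite hi.
case: insubP => [j' _ ej|]; last by rewrite hj.
by congr (A _ _); apply: val_inj.
Qed.

Section MatrixShape.
Variables (F : finFieldType) (k d : nat).
Notation randT := ('cV[F]_(k - 1) * 'M[F]_(k - 1) * 'M[F]_(d - k, k - 1))%type.
Notation secT := 'rV[F]_(d - k + 1).

Lemma MupperD (s s' : secT) (r r' : randT) (i j : nat) :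
  Mupper (s + s') (r + r') i j = Mupper s r i j + Mupper s' r' i j.
Proof.
case: r r' => [[ra Rb] Rc] [[ra' Rb'] Rc']; rewrite /Mupper /=.
by do !case: ifP => _; rewrite ?mgetD ?addr0.
Qed.

Lemma MmatD (s s' : secT) (r r' : randT) :
  Mmat (s + s') (r + r') = Mmat s r + Mmat s' r'.
Proof. by apply/matrixP => i j; rewrite !mxE; case: ifP => _; rewrite MupperD. Qed.

Lemma Mmat_sym (s : secT) (r : randT) : (Mmat s r)^T = Mmat s r.
Proof.
apply/matrixP => i j; rewrite !mxE.
case: (ltngtP i j) => // eq_ij.
by have -> : i = j by apply: val_inj.
Qed.

Definition rand_of (f : nat -> nat -> F) : randT :=
  (\col_(i < k - 1) f 0%N i.+1,
   \matrix_(i < k - 1, j < k - 1) f i.+1 j.+1,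
   \matrix_(i < d - k, j < k - 1) f (i + k)%N j.+1).

Lemma Mmat_rand_of (s : secT) (f : nat -> nat -> F) :
  (forall a b, f a b = f b a) ->
  f 0%N 0%N = mget s 0 (d - k) ->
  (forall b, (k <= b < d)%N -> f 0%N b = mget s 0 (b - k)) ->
  (forall a b, (k <= a)%N -> (k <= b)%N -> f a b = 0) ->
  Mmat s (rand_of f) = \matrix_(a < d, b < d) f a b.
Proof.
move=> f_sym f00 f0b f_zero.
suff upper (i j : nat) : (i <= j)%N -> (j < d)%N -> Mupper s (rand_of f) i j = f i j.
  apply/matrixP => i j; rewrite !mxE; case: ifP => le_ij; first exact: upper.
  by rewrite upper 1?f_sym //; lia.
move=> le_ij lt_jd; rewrite /Mupper /rand_of.
case: eqP => [-> | i_neq0].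
  case: eqP => [-> | j_neq0] //; case: ifP => lt_jk; last by rewrite f0b //; lia.
  have j_ok : (j.-1 < k - 1)%N by lia.
  by rewrite (mget_ord _ j_ok (ltn0Sn 0)) mxE /=; congr f; lia.
case: ifP => lt_ik; last by rewrite f_zero //; lia.
have i_ok : (i.-1 < k - 1)%N by lia.
case: ifP => lt_jk.
  have j_ok : (j.-1 < k - 1)%N by lia.
  by rewrite (mget_ord _ i_ok j_ok) mxE /=; congr f; lia.
have j_ok : (j - k < d - k)%N by lia.
by rewrite (mget_ord _ j_ok i_ok) mxE f_sym /=; congr f; lia.
Qed.

End MatrixShape.

Section VanishingForm.
Variables (F : fieldType) (k d : nat) (xs : seq F).
Hypotheses (xs_small : (size xs < k)%N) (k_le_d : (k <= d)%N) (xs_nz : 0 \notin xs).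
Variables (t0 : F) (t : nat -> F).

Definition vanish : {poly F} := \prod_(x <- xs) ('X - x%:P).

Lemma size_vanish : size vanish = (size xs).+1.
Proof. by rewrite size_prod_XsubC. Qed.

Lemma vanish_root x : x \in xs -> vanish.[x] = 0.
Proof. by move=> xs_x; apply/eqP; rewrite -/(root _ _) root_prod_XsubC. Qed.

Lemma vanish_coef_high b : (k <= b)%N -> vanish`_b = 0.
Proof. by move=> le_kb; apply: nth_default; rewrite size_vanish; lia. Qed.

Lemma vanish_coef0_neq0 : vanish`_0 != 0.
Proof.
rewrite -horner_coef0 horner_prod prodf_seq_neq0; apply/allP => x xs_x /=.
by rewrite !hornerE oppr_eq0; apply: contraNneq xs_nz => <-.
Qed.

(* The coefficients of degree >= k that the multiple [high] of P must carry. *)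
Definition target : {poly F} :=
  \poly_(i < d) (if (k <= i)%N then t i / vanish`_0 else 0).

Definition high : {poly F} := target %/ vanish * vanish.

(* [high] differs from [target] by a remainder of degree < k. *)
Lemma highE : high = target - target %% vanish.
Proof. by rewrite {1}(Pdiv.Field.divp_eq target vanish) addrK. Qed.

Lemma size_mod_vanish : (size (target %% vanish)%R < k)%N.
Proof.
have := ltn_modp target vanish; rewrite -size_poly_eq0 size_vanish /=; lia.
Qed.

Lemma high_coef b : (k <= b)%N -> high`_b = target`_b.
Proof.
move=> le_kb; rewrite highE coefB [(_ %% _)`_b]nth_default ?subr0 //.
by move: size_mod_vanish => /ltnW /leq_trans; apply.
Qed.

Lemma size_high : (size high <= d)%N.
Proof.
rewrite highE; apply: leq_trans (size_polyD _ _) _.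
rewrite size_polyN geq_max size_poly /=.
by move: size_mod_vanish => /ltnW /leq_trans; apply.
Qed.

Lemma high_root x : x \in xs -> high.[x] = 0.
Proof. by move=> xs_x; rewrite hornerM vanish_root // mulr0. Qed.

(* The constant c chosen so that the (0, 0) entry equals t0. *)
Definition corner : F :=
  (t0 - 2%:R * high`_0 * vanish`_0) / vanish`_0 ^+ 2.

Definition form (a b : nat) : F :=
  high`_a * vanish`_b + vanish`_a * high`_b + corner * vanish`_a * vanish`_b.

Lemma form_sym a b : form a b = form b a.
Proof. by rewrite /form; ring. Qed.

Lemma form00 : form 0 0 = t0.
Proof. by rewrite /form /corner; field; apply: vanish_coef0_neq0. Qed.

Lemma form0_high b : (k <= b < d)%N -> form 0 b = t b.
Proof.
case/andP=> le_kb lt_bd; rewrite /form (vanish_coef_high le_kb) (high_coef le_kb).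
rewrite coef_poly lt_bd le_kb; field; exact: vanish_coef0_neq0.
Qed.

Lemma form_high_high a b : (k <= a)%N -> (k <= b)%N -> form a b = 0.
Proof.
by move=> le_ka le_kb; rewrite /form !vanish_coef_high // !(mulr0, mul0r, addr0).
Qed.

Lemma form_kernel x b : x \in xs -> \sum_(a < d) x ^+ a * form a b = 0.
Proof.
move=> xs_x.
have high0 := horner_coef_wide x size_high; rewrite high_root // in high0.
have size_vanish_d : (size vanish <= d)%N by rewrite size_vanish; lia.
have vanish0 := horner_coef_wide x size_vanish_d; rewrite vanish_root // in vanish0.
rewrite (eq_bigr (fun a : 'I_d => (high`_a * x ^+ a) * vanish`_b
    + (vanish`_a * x ^+ a) * high`_b + corner * (vanish`_a * x ^+ a) * vanish`_b));
  last by move=> a _; rewrite /form; ring.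
rewrite !big_split /= -!mulr_suml -mulr_sumr -high0 -vanish0; ring.
Qed.

End VanishingForm.

Section Masking.
Variables (F : finFieldType) (n k d : nat) (alpha : 'I_n -> F) (J : {set 'I_n}).
Hypotheses (k_pos : (0 < k)%N) (k_le_d : (k <= d)%N) (J_small : (#|J| <= k - 1)%N)
  (alpha_nz : forall i, alpha i != 0).
Notation randT := ('cV[F]_(k - 1) * 'M[F]_(k - 1) * 'M[F]_(d - k, k - 1))%type.
Notation secT := 'rV[F]_(d - k + 1).

Lemma share_kernel (delta : secT) :
  exists r0 : randT, forall j, j \in J -> (psi d alpha j)^T *m Mmat delta r0 = 0.
Proof.
pose xs := [seq alpha j | j <- enum J].
have xs_small : (size xs < k)%N.
  by rewrite size_map -cardE (leq_ltn_trans J_small) // subn1 ltn_predL.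
have xs_nz : 0 \notin xs by apply/mapP => -[j _ /esym/eqP]; apply/negP.
pose f := form k d xs (mget delta 0 (d - k)) (fun b => mget delta 0 (b - k)).
exists (rand_of k d f) => j J_j.
rewrite (Mmat_rand_of (form_sym _ _ _ _ _)) ?form00 //; first last.
- by move=> a b; apply: form_high_high.
- by move=> b; apply: form0_high.
apply/matrixP => z b; rewrite !mxE.
under eq_bigr => a _ do rewrite !mxE.
by apply: form_kernel => //; apply: map_f; rewrite mem_enum.
Qed.

Lemma share_masking (s1 s2 : secT) :
  exists r0 : randT, forall r j, j \in J ->
    (psi d alpha j)^T *m Mmat s1 (r + r0) = (psi d alpha j)^T *m Mmat s2 r.
Proof.
have [r0 kill] := share_kernel (s1 - s2).
exists r0 => r j J_j.
by rewrite -{1}(subrKC s2 s1) MmatD mulmxDr kill // addr0.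
Qed.

End Masking.

Lemma card_fiber_transport (T : finType) (U : eqType) (g1 g2 : T -> U) (tau : T -> T) :
  injective tau -> (forall r, g1 (tau r) = g2 r) ->
  forall v, #|[set r | g1 r == v]| = #|[set r | g2 r == v]|.
Proof.
move=> tau_inj g1_tau v; rewrite -(card_preimset _ tau_inj).
by apply: eq_card => r; rewrite !inE g1_tau.
Qed.

Section Protocol.
Variables (F : finFieldType) (n k d : nat) (alpha : 'I_n -> F) (G : rel (option 'I_n)).
Hypothesis alpha_inj : injective alpha.

Notation stateT := (state F n d).
Notation entry := (option 'I_n * payload F d)%type.
Notation ps := (psi d alpha).
Notation randT := ('cV[F]_(k - 1) * 'M[F]_(k - 1) * 'M[F]_(d - k, k - 1))%type.
Notation secT := 'rV[F]_(d - k + 1).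

(* The value psi_a^T M psi_b that a sends to b in an honest run. *)
Definition pair_value (M : 'M[F]_d) (a b : 'I_n) : F := ((ps a)^T *m M *m ps b) 0 0.

Definition correct_entry (M : 'M[F]_d) (b : 'I_n) (e : entry) : bool :=
  match e with
  | (None, inl w) => w == (ps b)^T *m M
  | (Some a, inr x) => x == pair_value M a b
  | _ => false
  end.

(* The data-independent part of an entry: its sender and its kind. *)
Definition entry_shape (e : entry) : option 'I_n * bool :=
  (e.1, if e.2 is inl _ then true else false).

Definition senders (l : seq entry) : seq 'I_n := map fst (scalars_of l).

(* The control decisions of [react] only look at the shapes of received entries. *)
Lemma senders_shape (l1 l2 : seq entry) :
  map entry_shape l1 = map entry_shape l2 -> senders l1 = senders l2.
Proof.
elim: l1 l2 => [|[o1 p1] l1 IH] [|[o2 p2] l2] //= [eq_o eq_p] /IH.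
rewrite /senders /scalars_of /= => {}IH.
case: o1 o2 eq_o => [a1|] [a2|] //= [<-].
by case: p1 p2 eq_p => ? [] ? //= _; rewrite IH.
Qed.

Lemma dvec_shape (l1 l2 : seq entry) :
  map entry_shape l1 = map entry_shape l2 -> isSome (dvec_of l1) = isSome (dvec_of l2).
Proof.
elim: l1 l2 => [|[o1 p1] l1 IH] [|[o2 p2] l2] //= [eq_o eq_p] /IH.
rewrite /dvec_of /= => {}IH.
by case: o1 o2 eq_o => [a1|] [a2|] // _; case: p1 p2 eq_p => ? [] ? //= _.
Qed.

Lemma scalars_of_rcons_vec (l : seq entry) (w : 'rV[F]_d) :
  scalars_of (rcons l (None, inl w)) = scalars_of l.
Proof. by rewrite /scalars_of -cats1 pmap_cat /= cats0. Qed.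

Lemma scalars_of_rcons_scalar (l : seq entry) (a : 'I_n) (x : F) :
  scalars_of (rcons l (Some a, inr x)) = rcons (scalars_of l) (a, x).
Proof. by rewrite /scalars_of -cats1 pmap_cat /= cats1. Qed.

Definition same_traffic (t1 t2 : stateT) : Prop :=
  [/\ ddel t1 = ddel t2, del t1 = del t2, fired t1 = fired t2,
      (forall a b, isSome (msg t1 a b) = isSome (msg t2 a b)) &
      (forall b, map entry_shape (recv t1 b) = map entry_shape (recv t2 b))].

Lemma react_same_traffic (t1 t2 : stateT) (b : 'I_n) :
  same_traffic t1 t2 -> same_traffic (react alpha G t1 b) (react alpha G t2 b).
Proof.
case=> eq_dd eq_del eq_fired eq_msg eq_recv; rewrite /react -eq_fired.
case: (fired t1 b) => //.
have eq_senders := senders_shape (eq_recv b); have eq_dvec := dvec_shape (eq_recv b).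
case: (inND G b).
  case: (dvec_of (recv t1 b)) eq_dvec => [w1|]; case: (dvec_of (recv t2 b)) => [w2|] //= _.
  by split => //= a j; case: ifP.
have -> : size (scalars_of (recv t1 b)) = size (scalars_of (recv t2 b)).
  by rewrite -(size_map fst) -[RHS](size_map fst); congr size.
case: ifP => _ //.
by split => //= a j; rewrite /senders in eq_senders; rewrite eq_senders; case: ifP.
Qed.

Lemma step_same_traffic (s1 s2 : secT) (r1 r2 : randT) (t1 t2 : stateT) ev :
  same_traffic t1 t2 -> same_traffic (step alpha G s1 r1 t1 ev) (step alpha G s2 r2 t2 ev).
Proof.
move=> same; have [eq_dd eq_del eq_fired eq_msg eq_recv] := same.
case: ev => [[a|] dst] /=.
  have := eq_msg a dst.
  case: (msg t1 a dst) => [x1|]; case: (msg t2 a dst) => [x2|] //= _.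
  rewrite -eq_del; case: ifP => _ //.
  by apply: react_same_traffic; split => //= j; case: ifP => _; rewrite ?map_rcons eq_recv.
rewrite -eq_dd; case: ifP => _ //.
by apply: react_same_traffic; split => //= j; case: ifP => _; rewrite ?map_rcons eq_recv.
Qed.

Lemma run_same_traffic (s1 s2 : secT) (r1 r2 : randT) sched :
  same_traffic (run alpha G s1 r1 sched) (run alpha G s2 r2 sched).
Proof.
rewrite /run; elim/last_ind: sched => [|sched ev IH]; first by split.
by rewrite !foldl_rcons; apply: step_same_traffic.
Qed.

(* Invariant of a run for the matrix M: pending and received values are
   correct, and each participant hears at most once from each sender. *)
Definition honest (M : 'M[F]_d) (t : stateT) : Prop :=
  [/\ (forall a b x, msg t a b = Some x -> x = pair_value M a b),
      (forall b, all (correct_entry M b) (recv t b)),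
      (forall b, uniq (senders (recv t b))) &
      (forall a b, a \in senders (recv t b) -> del t a b)].

Lemma dvec_correct (M : 'M[F]_d) (b : 'I_n) (l : seq entry) (w : 'rV[F]_d) :
  all (correct_entry M b) l -> dvec_of l = Some w -> w = (ps b)^T *m M.
Proof.
elim: l => [|[[a|] [w'|x]] l IH] //=; rewrite /dvec_of /=.
all: try by case/andP => _ /IH; apply.
by case/andP => /eqP -> _ [<-].
Qed.

Lemma scalars_correct (M : 'M[F]_d) (b : 'I_n) (l : seq entry) (p : 'I_n * F) :
  all (correct_entry M b) l -> p \in scalars_of l -> p.2 = pair_value M p.1 b.
Proof.
elim: l => [|[[a|] [w'|x]] l IH] //=; rewrite /scalars_of /=.
all: try by case/andP => _ /IH; apply.
by case/andP => /eqP x_val /IH IH'; rewrite inE => /orP [/eqP -> | /IH'].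
Qed.

(* The Vandermonde system of step (iii) for the sender list a. *)
Definition node_matrix (a : seq 'I_n) (i0 : 'I_n) : 'M[F]_d :=
  \matrix_(t < d, c < d) alpha (nth i0 a t) ^+ c.

Lemma node_matrix_unit (a : seq 'I_n) (i0 : 'I_n) :
  size a = d -> uniq a -> node_matrix a i0 \in unitmx.
Proof.
move=> size_a uniq_a.
have -> : node_matrix a i0 = (Vandermonde d (\row_t alpha (nth i0 a t)))^T.
  by apply/matrixP => t c; rewrite !mxE.
rewrite unitmx_tr unitmxE det_Vandermonde unitfE.
apply/prodf_neq0 => i _; apply/prodf_neq0 => j lt_ij; rewrite !mxE subr_eq0.
apply: contraTneq lt_ij => /alpha_inj /eqP.
by rewrite nth_uniq ?size_a // => /eqP /val_inj ->; rewrite ltnn.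
Qed.

Lemma reconstruct_correct (M : 'M[F]_d) (b : 'I_n) (l : seq entry) :
  all (correct_entry M b) l -> uniq (senders l) -> (d <= size (scalars_of l))%N ->
  reconstruct alpha l = M *m ps b.
Proof.
move=> correct_l uniq_l size_l; rewrite /reconstruct.
set S := take d (scalars_of l).
have size_S : size S = d by rewrite size_take_min; apply/minn_idPl.
pose x0 := (b, 0 : F).
have nth_S (t : 'I_d) : nth None (map Some S) t = Some (nth x0 S t).
  by rewrite (nth_map x0) // size_S.
have V_eq : \matrix_(t < d, c < d)
    match nth None (map Some S) t with Some (a, _) => alpha a ^+ c | None => 0 end
    = node_matrix (map fst S) b.
  by apply/matrixP => t c; rewrite !mxE nth_S (nth_map x0) ?size_S //; case: (nth x0 S t).
have sigma_eq : \col_(t < d)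
    match nth None (map Some S) t with Some (_, x) => x | None => 0 end
    = node_matrix (map fst S) b *m (M *m ps b).
  apply/matrixP => t z; rewrite (ord1 z) !mxE nth_S.
  have S_t : nth x0 S t \in scalars_of l.
    by apply: (mem_take (n0 := d)); rewrite -/S mem_nth // size_S.
  rewrite [nth x0 S t]surjective_pairing (scalars_correct correct_l S_t) /pair_value.
  rewrite -mulmxA mxE; apply: eq_bigr => c _.
  by rewrite !mxE (nth_map x0) ?size_S.
rewrite V_eq sigma_eq mulKmx // node_matrix_unit ?size_map //.
by rewrite /S map_take; apply: take_uniq.
Qed.

Lemma react_honest (M : 'M[F]_d) (t : stateT) (b : 'I_n) :
  M^T = M -> honest M t -> honest M (react alpha G t b).
Proof.
move=> M_sym [msg_ok recv_ok uniq_ok del_ok]; rewrite /react.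
case: (fired t b) => //; case: (inND G b).
  case E: (dvec_of (recv t b)) => [w|] //; split => //= a j x.
  case: ifP => [/andP [/eqP -> _] [<-] | _]; last exact: msg_ok.
  by rewrite (dvec_correct (recv_ok b) E) /pair_value.
case: ifP => enough_scalars //; split => //= a i x.
case: ifP => [/and3P [/eqP -> _ _] [<-] | _]; last exact: msg_ok.
by rewrite (reconstruct_correct (recv_ok b) (uniq_ok b) enough_scalars) trmx_mul M_sym.
Qed.

Lemma step_honest (s : secT) (r : randT) (t : stateT) ev :
  honest (Mmat s r) t -> honest (Mmat s r) (step alpha G s r t ev).
Proof.
move=> [msg_ok recv_ok uniq_ok del_ok]; have M_sym := Mmat_sym s r.
case: ev => [[a|] dst] /=.
{ case E: (msg t a dst) => [x|] //; case: ifP => fresh //.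
  apply: react_honest => //; split => //= [j | j | a' j].
  - case: eqP => [->|_]; last exact: recv_ok.
    by rewrite all_rcons recv_ok andbT /= (msg_ok _ _ _ E) eqxx.
  - case: eqP => [->|_]; last exact: uniq_ok.
    rewrite /senders scalars_of_rcons_scalar map_rcons rcons_uniq uniq_ok andbT.
    by apply: contraNN fresh => /del_ok.
  - case: eqP => [->|_]; last by move/del_ok ->; rewrite orbT.
    rewrite /senders scalars_of_rcons_scalar map_rcons mem_rcons inE.
    by case/orP => [/eqP ->|/del_ok ->]; rewrite ?eqxx ?orbT. }
case: ifP => _ //; apply: react_honest => //; split => //= [j | j | a' j].
- case: eqP => [->|_]; last exact: recv_ok.
  by rewrite all_rcons recv_ok andbT /= eqxx.
- by case: eqP => [->|_]; rewrite /senders ?scalars_of_rcons_vec uniq_ok.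
- by case: eqP => [->|_]; rewrite /senders ?scalars_of_rcons_vec; apply: del_ok.
Qed.

Lemma run_honest (s : secT) (r : randT) sched :
  honest (Mmat s r) (run alpha G s r sched).
Proof.
rewrite /run; elim/last_ind: sched => [|sched ev IH]; first by split.
by rewrite foldl_rcons; apply: step_honest.
Qed.

(* By symmetry of M the value sent to b is computable from b's share. *)
Lemma pair_value_sym (M : 'M[F]_d) (a b : 'I_n) :
  M^T = M -> pair_value M a b = ((ps b)^T *m M *m ps a) 0 0.
Proof.
move=> M_sym; have entry_tr (X : 'M[F]_1) : X 0 0 = X^T 0 0 by rewrite mxE.
by rewrite /pair_value entry_tr !trmx_mul trmxK M_sym mulmxA.
Qed.

Lemma correct_log_unique (M1 M2 : 'M[F]_d) (j : 'I_n) (l1 l2 : seq entry) :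
  M1^T = M1 -> M2^T = M2 -> (ps j)^T *m M1 = (ps j)^T *m M2 ->
  map entry_shape l1 = map entry_shape l2 ->
  all (correct_entry M1 j) l1 -> all (correct_entry M2 j) l2 -> l1 = l2.
Proof.
move=> M1_sym M2_sym same_row.
elim: l1 l2 => [|[o1 p1] l1 IH] [|[o2 p2] l2] //= [eq_o eq_p] /IH {}IH.
case/andP => ok1 /IH {}IH /andP [ok2 /IH ->]; congr cons.
move: eq_o eq_p ok1 ok2 => /= <-.
case: o1 => [a|]; case: p1 => [w1|x1]; case: p2 => [w2|x2] //= _ /eqP -> /eqP ->.
  by rewrite !pair_value_sym // same_row.
by rewrite same_row.
Qed.

Lemma view_of_shares (J : {set 'I_n}) (s1 s2 : secT) (r1 r2 : randT) sched :
  (forall j, j \in J -> (ps j)^T *m Mmat s1 r1 = (ps j)^T *m Mmat s2 r2) ->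
  view alpha G J s1 r1 sched = view alpha G J s2 r2 sched.
Proof.
move=> same_rows; apply/eq_in_map => j; rewrite mem_enum => J_j.
have [_ _ _ _ same_shape] := run_same_traffic s1 s2 r1 r2 sched.
have [_ ok1 _ _] := run_honest s1 r1 sched.
have [_ ok2 _ _] := run_honest s2 r2 sched.
exact: correct_log_unique (Mmat_sym s1 r1) (Mmat_sym s2 r2) (same_rows j J_j)
  (same_shape j) (ok1 j) (ok2 j).
Qed.

End Protocol.

Unset Implicit Arguments.

Theorem theorem3 (F : finFieldType) (n k d : nat) (alpha : 'I_n -> F)
  (Hk : (2 <= k)%N) (Hkn : (k <= n)%N) (Hkd : (k <= d)%N) (Hq : (n < #|F|)%N)
  (Halpha : injective alpha) (Halpha0 : forall i, alpha i != 0)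
  (G : rel (option 'I_n)) (HG : irreflexive G)
  (J : {set 'I_n}) (HJ : (#|J| <= k - 1)%N) :
  (forall (sched : seq (option 'I_n * 'I_n)) (s1 s2 : 'rV[F]_(d - k + 1)) v,
     #|[set r : 'cV[F]_(k - 1) * 'M[F]_(k - 1) * 'M[F]_(d - k, k - 1)
          | view alpha G J s1 r sched == v]|
     = #|[set r : 'cV[F]_(k - 1) * 'M[F]_(k - 1) * 'M[F]_(d - k, k - 1)
          | view alpha G J s2 r sched == v]|)
  /\
  (forall (s1 s2 : 'rV[F]_(d - k + 1)) (w : seq 'rV[F]_d),
     #|[set r : 'cV[F]_(k - 1) * 'M[F]_(k - 1) * 'M[F]_(d - k, k - 1)
          | share_view alpha J s1 r == w]|
     = #|[set r : 'cV[F]_(k - 1) * 'M[F]_(k - 1) * 'M[F]_(d - k, k - 1)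
          | share_view alpha J s2 r == w]|).
Proof.
have k_pos : (0 < k)%N by apply: leq_trans Hk.
have masking := share_masking k_pos Hkd HJ Halpha0.
split => [sched s1 s2 v | s1 s2 w].
- have [r0 masked] := masking s1 s2.
  apply: (card_fiber_transport (addIr r0)) => r.
  by apply: (view_of_shares G Halpha); apply: masked.
- have [r0 masked] := masking s1 s2.
  apply: (card_fiber_transport (addIr r0)) => r.
  by apply/eq_in_map => j; rewrite mem_enum; apply: masked.
Qed.
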